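(* Let $I,I'$ be finite subsets of $\mathbb N\setminus\{0\}$ and $J,J'$ nonempty finite subsets of $\mathbb N\setminus\{0\}$ (the triples $(I,J,\emptyset)$, $(I',J',\emptyset)$ need not be reduced). Then $\mathcal Q[I,J]\subseteq\mathcal Q[I',J']$ if and only if for every $i\in I$ with $i\ne1$ there is $i'\in I'$ with $i\mid i'$, and for every $j\in J$ there is $j'\in J'$ with $j\mid j'$.
   Context: $\mathbf Q(\mathcal K)=\mathbf{ISPP}_u(\mathcal K)$. $\Gamma(\mathbf G,u)$ is the Wajsberg hoop on $[0,u]$ with $ab=\max\{a+b-u,0\}$, $a\to b=\min\{u-a+b,u\}$; $\mathbf{\L}_n=\Gamma(\mathbb Z,n)$ and $\mathbf{\L}_{n,k}=\Gamma(\mathbb Z\times_l\mathbb Z,(n,k))$ with the lexicographic order. $\mathcal Q[I,J]=\mathbf Q(\{\mathbf{\L}_i:i\in I\}\cup\{\mathbf{\L}_{j,1}:j\in J\})$. *)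

From mathcomp Require Import all_boot all_order all_algebra.
Set Implicit Arguments. Unset Strict Implicit. Unset Printing Implicit Defensive.
Import Order.TTheory GRing.Theory Num.Theory.

Record hoopAlg := HoopAlg {
  car :> Type;
  hmul : car -> car -> car;
  himp : car -> car -> car;
  hone : car }.

(* ab = max(a+b-n,0) (truncated subtraction), a->b = min(n-a+b,n). Values are
   always <= n, so inord is the identity on them. *)
Definition Ln_mul (n : nat) (a b : 'I_n.+1) : 'I_n.+1 := inord ((a + b) - n).
Definition Ln_imp (n : nat) (a b : 'I_n.+1) : 'I_n.+1 := inord (minn (n - a + b) n).
Definition Ln (n : nat) : hoopAlg :=
  @HoopAlg 'I_n.+1 (@Ln_mul n) (@Ln_imp n) ord_max.

Local Open Scope ring_scope.
Definition lexle (p q : int * int) : bool :=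
  (p.1 < q.1) || ((p.1 == q.1) && (p.2 <= q.2)).
Definition lexmax (p q : int * int) := if lexle p q then q else p.
Definition lexmin (p q : int * int) := if lexle p q then p else q.
Definition padd (p q : int * int) : int * int := (p.1 + q.1, p.2 + q.2).
Definition psub (p q : int * int) : int * int := (p.1 - q.1, p.2 - q.2).
Definition unit_nk (n k : nat) : int * int := ((n%:Z), (k%:Z)).
Definition inrange (n k : nat) (p : int * int) : bool :=
  lexle (0, 0) p && lexle p (unit_nk n k).
Definition Lcar (n k : nat) := {p : int * int | inrange n k p}.
(* clamp is the identity on values of the operations below (they stay in
   [(0,0),(n,k)]); it only serves to avoid carrying closure proofs. *)
Definition clamp (n k : nat) (p : int * int) : int * int :=
  if inrange n k p then p else (0, 0).
Lemma clamp_in (n k : nat) (p : int * int) : inrange n k (clamp n k p).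
Proof.
rewrite /clamp; case: ifP => // _.
rewrite /inrange /lexle /=.
by case: n.
Qed.
Definition mkL (n k : nat) (p : int * int) : Lcar n k :=
  exist _ (clamp n k p) (clamp_in n k p).
Definition Lnk_mul (n k : nat) (a b : Lcar n k) : Lcar n k :=
  mkL n k (lexmax (psub (padd (sval a) (sval b)) (unit_nk n k)) (0, 0)).
Definition Lnk_imp (n k : nat) (a b : Lcar n k) : Lcar n k :=
  mkL n k (lexmin (padd (psub (unit_nk n k) (sval a)) (sval b)) (unit_nk n k)).
Definition Lnk (n k : nat) : hoopAlg :=
  @HoopAlg (Lcar n k) (@Lnk_mul n k) (@Lnk_imp n k) (mkL n k (unit_nk n k)).
Local Close Scope ring_scope.

Inductive gcode := GL of nat | GLL of nat.
Definition alg_of (c : gcode) : hoopAlg :=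
  match c with GL n => Ln n | GLL n => Lnk n 1 end.
Definition inK (I J : seq nat) (c : gcode) : Prop :=
  match c with GL n => n \in I | GLL n => n \in J end.

Definition ultrafilter (Y : Type) (U : (Y -> Prop) -> Prop) : Prop :=
  [/\ U (fun _ => True), ~ U (fun _ => False),
      (forall S T : Y -> Prop, U S -> (forall y, S y -> T y) -> U T),
      (forall S T : Y -> Prop, U S -> U T -> U (fun y => S y /\ T y)) &
      (forall S : Y -> Prop, U S \/ U (fun y => ~ S y))].

(* A in ISPP_u(K): A is isomorphic to a subalgebra of a product
   prod_{x in X} (prod_{y in Y x} C x y) / U_x of ultraproducts of members of K.
   The embedding is given by a map f choosing representatives in
   prod_y C x y; "modulo U_x" equality is membership of the agreement set in U_x. *)
Definition ISPPu (K : gcode -> Prop) (A : hoopAlg) : Prop :=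
  exists (X : Type) (Y : X -> Type) (U : forall x, (Y x -> Prop) -> Prop)
         (C : forall x, Y x -> gcode)
         (f : A -> forall x (y : Y x), alg_of (C x y)),
    (forall x, ultrafilter (U x)) /\
    (forall x y, K (C x y)) /\
    (forall a b x, U x (fun y => f (hmul a b) x y = hmul (f a x y) (f b x y))) /\
    (forall a b x, U x (fun y => f (himp a b) x y = himp (f a x y) (f b x y))) /\
    (forall x, U x (fun y => f (hone A) x y = hone (alg_of (C x y)))) /\
    (forall a b, (forall x, U x (fun y => f a x y = f b x y)) -> a = b).

Definition QIJ (I J : seq nat) (A : hoopAlg) : Prop := ISPPu (inK I J) A.

From mathcomp Require Import all_boot all_order all_algebra.
From mathcomp Require Import zify ring.
From Stdlib Require Import Classical ClassicalEpsilon.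

(* An algebra of ISPP_u(K) refuting a one-variable quasi-identity yields a
   member of K refuting it, so Q[I,J] <= Q[I',J'] transfers refutations from
   the L_i, L_{j,1} to the L_i', L_{j',1}.  For i > 1 the coatom of L_i
   refutes  x^i = x^(i+1) & (x^(i-1) -> x^i) = x  =>  x^(i-1) = x^i ;
   a refuting x in L_n satisfies n = i (n - x), and L_{n,1} has none since
   i does not divide 1.  For j >= 1 put d = x^j -> x^(j+1): the element
   (j-1, 1) of L_{j,1} refutes  x^(j+1) = x^(j+2)  =>  d^M = d^(M+1)  for
   every M (there d = (j, 0) lies infinitesimally below 1), whereas with M
   beyond I' and J' every L_n satisfies it and a refutation in L_{n,1} forces
   d = j (u - x) to have first coordinate n.  Conversely a |-> a (i'/i)
   embeds L_i into L_i', (a, b) |-> (a (j'/j), b) embeds L_{j,1} into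
   L_{j',1}, L_1 embeds into every L_{j,1}, and ISPP_u(K) only grows when each
   member of K is replaced by a member of K' containing it. *)

Set Implicit Arguments. Unset Strict Implicit. Unset Printing Implicit Defensive.
Import Order.TTheory GRing.Theory Num.Theory.

Section Ultrafilter.
Variables (Y : Type) (U : (Y -> Prop) -> Prop).
Hypothesis ultraU : ultrafilter U.

Lemma ultra_mono (S T : Y -> Prop) : U S -> (forall y, S y -> T y) -> U T.
Proof. by case: ultraU => _ _ mono _ _; apply: mono. Qed.

Lemma ultra_and (S T : Y -> Prop) : U S -> U T -> U (fun y => S y /\ T y).
Proof. by case: ultraU => _ _ _ meet _; apply: meet. Qed.

Lemma ultra_all (S : Y -> Prop) : (forall y, S y) -> U S.
Proof. by case: ultraU => top _ mono _ _ allS; apply: (mono _ _ top). Qed.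

Lemma ultra_witness (S : Y -> Prop) : U S -> exists y, S y.
Proof.
move=> US; apply: NNPP => noS; case: ultraU => _ bot _ _ _; apply: bot.
by apply: ultra_mono US _ => y Sy; apply: noS; exists y.
Qed.

Lemma ultra_not (S : Y -> Prop) : ~ U S -> U (fun y => ~ S y).
Proof. by case: ultraU => _ _ _ _ /(_ S) []. Qed.

End Ultrafilter.

Inductive term := Var | One | Mul of term & term | Imp of term & term.

Fixpoint eval (A : hoopAlg) (a : A) (t : term) : A :=
  match t with
  | Var => a
  | One => hone A
  | Mul t1 t2 => hmul (eval a t1) (eval a t2)
  | Imp t1 t2 => himp (eval a t1) (eval a t2)
  end.

Fixpoint pow (t : term) (k : nat) : term :=
  if k is k'.+1 then Mul (pow t k') t else One.
Arguments pow : simpl never.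

Lemma eval_Imp (A : hoopAlg) (a : A) s t :
  eval a (Imp s t) = himp (eval a s) (eval a t).
Proof. by []. Qed.

Lemma eval_pow0 (A : hoopAlg) (a : A) t : eval a (pow t 0) = hone A.
Proof. by []. Qed.

Lemma eval_powS (A : hoopAlg) (a : A) t k :
  eval a (pow t k.+1) = hmul (eval a (pow t k)) (eval a t).
Proof. by []. Qed.

Lemma eval_pow (A : hoopAlg) (a : A) t k :
  eval a (pow t k) = eval (eval a t) (pow Var k).
Proof. by elim: k => // k; rewrite !eval_powS => ->. Qed.

Definition holds (A : hoopAlg) (a : A) (e : term * term) : Prop :=
  let: (s, t) := e in eval a s = eval a t.

Lemma holdsE (A : hoopAlg) (a : A) s t : holds a (s, t) = (eval a s = eval a t).
Proof. by []. Qed.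

Definition holds_all (A : hoopAlg) (a : A) (es : seq (term * term)) : Prop :=
  foldr (fun e P => holds a e /\ P) True es.

(* Los's theorem for the finitely many terms involved, then a factor
   separating the two sides of the conclusion. *)
Lemma ISPPu_counterexample (K : gcode -> Prop) (A : hoopAlg) (a : A) es e :
  ISPPu K A -> holds_all a es -> ~ holds a e ->
  exists2 c, K c & exists b : alg_of c, holds_all b es /\ ~ holds b e.
Proof.
case=> X [Y [U [C [f [ultraU [KC [fmul [fimp [fone finj]]]]]]]]] a_es not_ae.
have f_eval x t : U x (fun y => f (eval a t) x y = eval (f a x y) t).
  elim: t => [||t1 IH1 t2 IH2|t1 IH1 t2 IH2] /=.
  - exact: (ultra_all (ultraU x)).
  - exact: fone.
  - apply: (ultra_mono (ultraU x) (ultra_and (ultraU x) (ultra_and (ultraU x) IH1 IH2)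
      (fmul (eval a t1) (eval a t2) x))).
    by move=> y [[-> ->] ->].
  - apply: (ultra_mono (ultraU x) (ultra_and (ultraU x) (ultra_and (ultraU x) IH1 IH2)
      (fimp (eval a t1) (eval a t2) x))).
    by move=> y [[-> ->] ->].
have f_holds x e' : holds a e' -> U x (fun y => holds (f a x y) e').
  case: e' => s t ast.
  apply: (ultra_mono (ultraU x) (ultra_and (ultraU x) (f_eval x s) (f_eval x t))).
  by move=> y [Es Et] /=; rewrite -Es -Et ast.
have f_holds_all x : U x (fun y => holds_all (f a x y) es).
  elim: es a_es => [_|e' es IH [ae' a_es]]; first exact: (ultra_all (ultraU x)).
  exact: (ultra_and (ultraU x) (f_holds x e' ae') (IH a_es)).
case: e not_ae => s t not_ast.
have [x x_sep] : exists x, ~ U x (fun y => f (eval a s) x y = f (eval a t) x y).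
  apply: NNPP => agree; apply/not_ast/finj => x.
  by apply: NNPP => sep; apply: agree; exists x.
have [y [[[Es Et] y_es] y_sep]] := ultra_witness (ultraU x) (ultra_and (ultraU x)
  (ultra_and (ultraU x) (ultra_and (ultraU x) (f_eval x s) (f_eval x t)) (f_holds_all x))
  (ultra_not (ultraU x) x_sep)).
by exists (C x y) => //; exists (f a x y); split=> //=; rewrite -Es -Et.
Qed.

Lemma ISPPu_gen (K : gcode -> Prop) c : K c -> ISPPu K (alg_of c).
Proof.
move=> Kc; exists unit, (fun _ => unit), (fun _ (S : unit -> Prop) => S tt),
  (fun _ _ => c), (fun a _ _ => a).
split.
  move=> _; split=> //; first by move=> S T + ST; apply: ST.
  by move=> S; case: (classic (S tt)); [left|right].
by do 4 split=> //; move=> a b /(_ tt).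
Qed.

Definition embedding (A B : hoopAlg) (e : A -> B) : Prop :=
  [/\ {morph e : a b / hmul a b}, {morph e : a b / himp a b},
      e (hone A) = hone B & injective e].

Lemma ISPPu_embed (K K' : gcode -> Prop) (A : hoopAlg) :
  (forall c, K c -> exists2 c', K' c' & exists e : alg_of c -> alg_of c', embedding e) ->
  ISPPu K A -> ISPPu K' A.
Proof.
move=> embK [X [Y [U [C [f [ultraU [KC [fmul [fimp [fone finj]]]]]]]]]].
have emb x y : {c' : gcode & {e : alg_of (C x y) -> alg_of c' | K' c' /\ embedding e}}.
  have [c' [K'c' e_ex]] :
      {c' : gcode | K' c' /\ exists e : alg_of (C x y) -> alg_of c', embedding e}.
    by apply: constructive_indefinite_description; case: (embK _ (KC x y)) => c' ? ?; exists c'.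
  by have [e ee] := constructive_indefinite_description _ e_ex; exists c', e.
pose e x y := proj1_sig (projT2 (emb x y)).
have [K'C e_emb] : (forall x y, K' (projT1 (emb x y))) /\ (forall x y, embedding (e x y)).
  by split=> x y; case: (proj2_sig (projT2 (emb x y))).
exists X, Y, U, (fun x y => projT1 (emb x y)), (fun a x y => e x y (f a x y)).
do 2 split=> //.
split; first by move=> a b x; apply: (ultra_mono (ultraU x) (fmul a b x)) => y ->; case: (e_emb x y).
split; first by move=> a b x; apply: (ultra_mono (ultraU x) (fimp a b x)) => y ->; case: (e_emb x y).
split; first by move=> x; apply: (ultra_mono (ultraU x) (fone x)) => y ->; case: (e_emb x y).
move=> a b eq_ab; apply: finj => x; apply: (ultra_mono (ultraU x) (eq_ab x)) => y.
by case: (e_emb x y) => _ _ _; apply.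
Qed.

Section Lukasiewicz.
Variable n : nat.

Lemma Ln_mulE (a b : Ln n) : hmul a b = a + b - n :> nat.
Proof. by rewrite /= /Ln_mul inordK //; have := ltn_ord a; have := ltn_ord b; lia. Qed.

Lemma Ln_impE (a b : Ln n) : himp a b = minn (n - a + b) n :> nat.
Proof. by rewrite /= /Ln_imp inordK //; lia. Qed.

Lemma Ln_powE (a : Ln n) k : eval a (pow Var k) = n - k * (n - a) :> nat.
Proof.
elim: k => [|k IH]; first by rewrite eval_pow0 subn0.
by rewrite eval_powS Ln_mulE IH /= mulSn; have := ltn_ord a; lia.
Qed.

Lemma Ln_pow_stable (a : Ln n) M :
  n <= M -> eval a (pow Var M) = eval a (pow Var M.+1).
Proof.
move=> le_nM; apply: ord_inj; rewrite !Ln_powE mulSn.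
have : 0 < n - a -> M <= M * (n - a) by move=> ?; rewrite leq_pmulr.
by have := ltn_ord a; lia.
Qed.

End Lukasiewicz.

Ltac unfold_lex := rewrite /inrange /clamp /lexmax /lexmin /lexle /padd /psub /unit_nk /=.
Ltac lex_cases := repeat case: ifP => /=; move=> *;
  first [reflexivity | (congr (_, _); lia) | (exfalso; lia)].

Section LexLukasiewicz.
Local Open Scope ring_scope.

Lemma pair_neq (p q : int * int) : p <> q -> (p.1 != q.1) || (p.2 != q.2).
Proof. by move=> neq; rewrite -negb_and; apply/negP => /pair_eqP. Qed.

Lemma lexmax0_gt0 (p : int * int) : 0 < p.1 -> lexmax p (0, 0) = p.
Proof. by case: p => p1 p2; rewrite /lexmax /lexle /= => p1_gt0; case: ifP => //; lia. Qed.

Lemma lexmax0_lt0 (p : int * int) : p.1 < 0 -> lexmax p (0, 0) = (0, 0).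
Proof. by case: p => p1 p2; rewrite /lexmax /lexle /= => p1_lt0; case: ifP => //; lia. Qed.

Variables n m : nat.

Lemma Lnk_sval_inj (a b : Lnk n m) : sval a = sval b -> a = b.
Proof. exact: val_inj. Qed.

Lemma Lnk_mulE (a b : Lnk n m) :
  sval (hmul a b) = lexmax (psub (padd (sval a) (sval b)) (unit_nk n m)) (0, 0).
Proof.
case: a b => [[a1 a2] a_in] [[b1 b2] b_in]; rewrite /= /Lnk_mul /mkL /= /clamp.
case: ifP => // /negP[]; move: a_in b_in; unfold_lex; repeat case: ifP => /=; lia.
Qed.

Lemma Lnk_impE (a b : Lnk n m) :
  sval (himp a b) = lexmin (padd (psub (unit_nk n m) (sval a)) (sval b)) (unit_nk n m).
Proof.
case: a b => [[a1 a2] a_in] [[b1 b2] b_in]; rewrite /= /Lnk_imp /mkL /= /clamp.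
case: ifP => // /negP[]; move: a_in b_in; unfold_lex; repeat case: ifP => /=; lia.
Qed.

Lemma Lnk_oneE : sval (hone (Lnk n m)) = unit_nk n m.
Proof. by rewrite /= /clamp; case: ifP => // /negP[]; unfold_lex; lia. Qed.

Lemma Lnk_powE (a : Lnk n m) k : sval (eval a (pow Var k)) =
  lexmax (n%:Z - k%:Z * (n%:Z - (sval a).1), m%:Z - k%:Z * (m%:Z - (sval a).2)) (0, 0).
Proof.
elim: k => [|k IH].
  by rewrite eval_pow0 Lnk_oneE !mul0r !subr0; unfold_lex; lex_cases.
rewrite eval_powS Lnk_mulE IH /=; case: a {IH} => [[a1 a2] a_in] /=; move: a_in; unfold_lex.
rewrite (intS k) !mulrDl !mul1r.
set M1 := k%:Z * _; set M2 := k%:Z * _.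
by move=> a_in; lex_cases.
Qed.

End LexLukasiewicz.

Definition coatom_prems i : seq (term * term) :=
  [:: (pow Var i, pow Var i.+1); (Imp (pow Var i.-1) (pow Var i), Var)].
Definition coatom_concl i : term * term := (pow Var i.-1, pow Var i).

Definition Ln_coatom i : Ln i := inord i.-1.

Lemma Ln_coatom_refutes i : 1 < i ->
  holds_all (Ln_coatom i) (coatom_prems i) /\ ~ holds (Ln_coatom i) (coatom_concl i).
Proof.
move=> lt1i; have coatomE : Ln_coatom i = i.-1 :> nat by rewrite inordK //; lia.
have powE k : eval (Ln_coatom i) (pow Var k) = i - k :> nat.
  by rewrite Ln_powE coatomE (_ : i - i.-1 = 1) ?muln1 //; lia.
split; last by rewrite /coatom_concl => /(congr1 (@nat_of_ord _)); rewrite !powE; lia.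
split; first by apply: ord_inj; rewrite !powE; lia.
by split=> //; apply: ord_inj; rewrite eval_Imp Ln_impE !powE coatomE; lia.
Qed.

Lemma Ln_coatom_refuted_dvd n i (b : Ln n) : 1 < i ->
  holds_all b (coatom_prems i) -> ~ holds b (coatom_concl i) -> i %| n.
Proof.
case: i => [|[|i]] // _ [/(congr1 (@nat_of_ord _)) pow_i].
move=> [/(congr1 (@nat_of_ord _)) imp_b _] neq.
have {}neq : eval b (pow Var i.+1) != eval b (pow Var i.+2) :> nat.
  by apply/negP => /eqP /ord_inj.
move: pow_i imp_b neq; rewrite eval_Imp Ln_impE !Ln_powE /= !(mulSn _ (n - b)).
have := ltn_ord b; set X := i * (n - b) => lt_bn pow_i imp_b neq.
by apply/dvdnP; exists (n - b); rewrite mulnC !mulSn -/X; lia.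
Qed.

Section LexCoatom.
Local Open Scope ring_scope.

Lemma Lnk_coatom_unrefuted n i (b : Lnk n 1) : (1 < i)%N ->
  holds_all b (coatom_prems i) -> ~ holds b (coatom_concl i) -> False.
Proof.
case: i => [|[|i]] // _ [/(congr1 sval)/pair_eqP pow_i [/(congr1 sval)/pair_eqP imp_b _]].
move=> /(contra_not (@Lnk_sval_inj _ _ _ _))/pair_neq neq; move: pow_i imp_b neq.
rewrite eval_Imp Lnk_impE !Lnk_powE /=; case: b => [[b1 b2] b_in] /=; move: b_in.
unfold_lex; rewrite !(intS i.+1) !(intS i) !mulrDl !mul1r.
set X1 := i%:Z * _; set X2 := i%:Z * _.
have X2_ge0 : 0 <= 1 - b2 -> 0 <= X2 by move=> ?; rewrite mulr_ge0.
have X2_le0 : 1 - b2 <= 0 -> X2 <= 0 by move=> ?; rewrite mulr_ge0_le0.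
by move=> b_in; repeat case: ifP => /=; lia.
Qed.

End LexCoatom.

Definition step_term j := Imp (pow Var j) (pow Var j.+1).
Definition step_prems j : seq (term * term) := [:: (pow Var j.+1, pow Var j.+2)].
Definition step_concl j M : term * term := (pow (step_term j) M, pow (step_term j) M.+1).

Lemma Ln_step_holds n j M (b : Ln n) : n <= M -> holds b (step_concl j M).
Proof. by rewrite /step_concl holdsE !(eval_pow _ (step_term j)); apply: Ln_pow_stable. Qed.

Section LexStep.
Local Open Scope ring_scope.

Definition step_witness j : Lnk j 1 := mkL j 1 (j%:Z - 1, 1).

Section StepWitness.
Variable j : nat.
Hypothesis j_gt0 : (0 < j)%N.

Lemma step_witnessE : sval (step_witness j) = (j%:Z - 1, 1).
Proof. by rewrite /= /clamp; case: ifP => // /negP[]; unfold_lex; lia. Qed.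

Lemma step_witness_powE k :
  sval (eval (step_witness j) (pow Var k)) = lexmax (j%:Z - k%:Z, 1) (0, 0).
Proof. by rewrite Lnk_powE step_witnessE; congr lexmax; congr (_, _) => /=; ring. Qed.

Lemma step_witness_stepE : sval (eval (step_witness j) (step_term j)) = (j%:Z, 0).
Proof.
rewrite eval_Imp Lnk_impE !step_witness_powE (@lexmax0_lt0 (j%:Z - j.+1%:Z, 1)) /=;
  last by lia.
by rewrite subrr; unfold_lex; lex_cases.
Qed.

Lemma step_witness_refutes M :
  holds_all (step_witness j) (step_prems j) /\ ~ holds (step_witness j) (step_concl j M).
Proof.
split.
  by split=> //; apply: Lnk_sval_inj; rewrite !step_witness_powE !lexmax0_lt0 //=; lia.
rewrite /step_concl holdsE !(eval_pow _ (step_term j)) => /(congr1 sval).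
rewrite !Lnk_powE step_witness_stepE /= subrr !mulr0 subr0 !lexmax0_gt0 //=; try lia.
by case; lia.
Qed.

End StepWitness.

Lemma Lnk_pow_unstable n M (z : Lnk n 1) : (n < M)%N ->
  eval z (pow Var M) <> eval z (pow Var M.+1) -> (sval z).1 = n%:Z /\ (sval z).2 <= 0.
Proof.
move=> lt_nM /(contra_not (@Lnk_sval_inj _ _ _ _))/pair_neq.
rewrite !Lnk_powE; case: z => [[z1 z2] z_in] /=; move: z_in.
unfold_lex; rewrite (intS M) !mulrDl !mul1r.
set Y1 := M%:Z * (n%:Z - z1); set Y2 := M%:Z * (1 - z2).
have Y1_ge : 0 < n%:Z - z1 -> M%:Z <= Y1 by move=> ?; rewrite /Y1 ler_peMr //; lia.
have Y2_ge0 : 0 <= 1 - z2 -> 0 <= Y2 by move=> ?; rewrite mulr_ge0.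
by move=> z_in; repeat case: ifP => /=; lia.
Qed.

Lemma Lnk_step_dvd n j (b : Lnk n 1) : (0 < j)%N -> holds_all b (step_prems j) ->
  (sval (eval b (step_term j))).1 = n%:Z -> (sval (eval b (step_term j))).2 <= 0 ->
  (j %| n)%N.
Proof.
case: j => // m _ [/(congr1 sval)/pair_eqP pow_eq _]; move: pow_eq.
rewrite /step_term eval_Imp Lnk_impE !Lnk_powE; case: b => [[b1 b2] b_in] /= pow_eq d1 d2.
have [k kE] : exists k : nat, n%:Z - b1 = k%:Z.
  exists `|n%:Z - b1|%N; rewrite gez0_abs //; move: b_in.
  by rewrite /inrange /lexle /=; lia.
suff nE : n%:Z = k%:Z + m%:Z * k%:Z by apply/dvdnP; exists k; lia.
move: b_in pow_eq d1 d2; rewrite -kE; unfold_lex.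
rewrite !(intS m.+2) !(intS m.+1) !(intS m) !mulrDl !mul1r.
set X1 := m%:Z * _; set X2 := m%:Z * _.
have X1_ge0 : 0 <= X1 by rewrite /X1 kE mulr_ge0.
have X2_ge0 : 0 <= 1 - b2 -> 0 <= X2 by move=> ?; rewrite mulr_ge0.
have X2_le0 : 1 - b2 <= 0 -> X2 <= 0 by move=> ?; rewrite mulr_ge0_le0.
by move=> b_in; repeat case: ifP => /=; lia.
Qed.

Lemma Lnk_step_refuted_dvd n j M (b : Lnk n 1) : (0 < j)%N -> (n < M)%N ->
  holds_all b (step_prems j) -> ~ holds b (step_concl j M) -> (j %| n)%N.
Proof.
move=> j_gt0 lt_nM b_prems; rewrite /step_concl holdsE !(eval_pow _ (step_term j)).
by move=> /(Lnk_pow_unstable lt_nM)[]; apply: Lnk_step_dvd.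
Qed.

End LexStep.

Definition Ln_scale n n' (a : Ln n) : Ln n' := inord (a * (n' %/ n)).

Lemma Ln_scale_embedding n n' : 0 < n' -> n %| n' -> embedding (@Ln_scale n n').
Proof.
move=> n'_gt0 /dvdnP[q n'E]; subst n'.
have [q_gt0 n_gt0] : 0 < q /\ 0 < n by move: n'_gt0; rewrite muln_gt0 => /andP.
have scaleE (a : Ln n) : Ln_scale (q * n) a = a * q :> nat.
  by rewrite /Ln_scale mulnK // inordK // ltnS mulnC leq_mul2l (ltnSE (ltn_ord a)) orbT.
split.
- by move=> a b; apply: ord_inj; rewrite scaleE !Ln_mulE !scaleE mulnBl mulnDl (mulnC q n).
- move=> a b; apply: ord_inj.
  by rewrite scaleE !Ln_impE !scaleE minnMl mulnDl mulnBl (mulnC q n).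
- by apply: ord_inj; rewrite scaleE /= mulnC.
- move=> a b /(congr1 (@nat_of_ord _)); rewrite !scaleE => /eqP.
  by rewrite eqn_pmul2r // => /eqP /ord_inj.
Qed.

Section LexEmbeddings.
Local Open Scope ring_scope.

Definition L1_embed n m (a : Ln 1) : Lnk n m := mkL n m (((a * n)%N)%:Z, ((a * m)%N)%:Z).

Lemma L1_embedding n m : (0 < n)%N -> embedding (@L1_embed n m).
Proof.
move=> n_gt0.
have embedE (a : Ln 1) : sval (L1_embed n m a) = (((a * n)%N)%:Z, ((a * m)%N)%:Z).
  rewrite /= /clamp; case: ifP => // /negP[]; have := ltn_ord a.
  by case: a => [[|[|?]] ?] //= _; unfold_lex; lia.
have L1_cases (a : Ln 1) : a = ord0 \/ a = ord_max.
  by case: a => [[|[|k]] lt_k2]; [left|right|]; [apply: val_inj..|].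
split.
- move=> a b; apply: Lnk_sval_inj; rewrite Lnk_mulE !embedE.
  by case: (L1_cases a) => ->; case: (L1_cases b) => ->; rewrite Ln_mulE /=; unfold_lex; lex_cases.
- move=> a b; apply: Lnk_sval_inj; rewrite Lnk_impE !embedE.
  by case: (L1_cases a) => ->; case: (L1_cases b) => ->; rewrite Ln_impE /=; unfold_lex; lex_cases.
- by apply: Lnk_sval_inj; rewrite embedE Lnk_oneE /= !mul1n.
- move=> a b /(congr1 sval); rewrite !embedE => -[/eqP].
  by rewrite eqn_pmul2r // => /eqP /ord_inj.
Qed.

Definition Lnk_scale n n' m (a : Lnk n m) : Lnk n' m :=
  mkL n' m ((sval a).1 * (n' %/ n)%N%:Z, (sval a).2).

Lemma Lnk_scale_embedding n n' m :
  (0 < n')%N -> (n %| n')%N -> embedding (@Lnk_scale n n' m).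
Proof.
move=> n'_gt0 /dvdnP[q n'E]; subst n'.
have [q_gt0 n_gt0] : (0 < q)%N /\ (0 < n)%N by move: n'_gt0; rewrite muln_gt0 => /andP.
pose sc (p : int * int) := (p.1 * q%:Z, p.2).
have lexle_sc p r : lexle (sc p) (sc r) = lexle p r.
  by rewrite /lexle /= ltr_pM2r ?ltz_nat // (inj_eq (mulIf _)) //; lia.
have unitE : unit_nk (q * n) m = sc (unit_nk n m) by rewrite /unit_nk /sc /= PoszM mulrC.
have inrange_sc p : inrange (q * n) m (sc p) = inrange n m p.
  by rewrite /inrange unitE -[in LHS](_ : sc (0, 0) = (0, 0)) ?lexle_sc // /sc mul0r.
have scaleE (a : Lnk n m) : sval (Lnk_scale (q * n) a) = sc (sval a).
  by rewrite /= /clamp mulnK // -/(sc (sval a)) inrange_sc (svalP a).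
have lexmax_sc p r : lexmax (sc p) (sc r) = sc (lexmax p r) by rewrite /lexmax lexle_sc; case: ifP.
have lexmin_sc p r : lexmin (sc p) (sc r) = sc (lexmin p r) by rewrite /lexmin lexle_sc; case: ifP.
have padd_sc p r : padd (sc p) (sc r) = sc (padd p r) by rewrite /padd /sc /= mulrDl.
have psub_sc p r : psub (sc p) (sc r) = sc (psub p r) by rewrite /psub /sc /= mulrBl.
split.
- move=> a b; apply: Lnk_sval_inj; rewrite scaleE !Lnk_mulE !scaleE unitE padd_sc psub_sc.
  by rewrite -lexmax_sc /sc /= mul0r.
- move=> a b; apply: Lnk_sval_inj; rewrite scaleE !Lnk_impE !scaleE unitE psub_sc padd_sc.
  by rewrite lexmin_sc.
- by apply: Lnk_sval_inj; rewrite scaleE !Lnk_oneE unitE.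
- move=> a b /(congr1 sval); rewrite !scaleE; case: a b => [[a1 a2] ?] [[b1 b2] ?] /=.
  by rewrite /sc /= => -[/(mulIf _) a1E a2E]; apply: Lnk_sval_inj; rewrite /= a1E ?a2E //; lia.
Qed.

End LexEmbeddings.

Section Inclusion.
Variables I J I' J' : seq nat.
Hypothesis QIJ_sub : forall A : hoopAlg, QIJ I J A -> QIJ I' J' A.

Lemma QIJ_sub_dvd_I i : i \in I -> 1 < i -> exists2 i', i' \in I' & i %| i'.
Proof.
move=> iI lt1i; have [coatom_prems_hold coatom_concl_fails] := Ln_coatom_refutes lt1i.
have [[n|n] nK' [b [b_prems b_concl]]] :=
  ISPPu_counterexample (QIJ_sub (@ISPPu_gen (inK I J) (GL i) iI))
    coatom_prems_hold coatom_concl_fails.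
- by exists n => //; apply: Ln_coatom_refuted_dvd b_prems b_concl.
- by case: (Lnk_coatom_unrefuted lt1i b_prems b_concl).
Qed.

Lemma QIJ_sub_dvd_J j : j \in J -> 0 < j -> exists2 j', j' \in J' & j %| j'.
Proof.
move=> jJ j_gt0; pose M := (\max_(x <- I' ++ J') x).+1.
have lt_M x : x \in I' ++ J' -> x < M.
  by move=> xIJ; rewrite ltnS; apply: (leq_bigmax_seq _ xIJ).
have [step_prems_hold step_concl_fails] := step_witness_refutes j_gt0 M.
have [[n|n] nK' [b [b_prems b_concl]]] :=
  ISPPu_counterexample (QIJ_sub (@ISPPu_gen (inK I J) (GLL j) jJ))
    step_prems_hold step_concl_fails.
- by case: b_concl; apply/Ln_step_holds/ltnW/lt_M; rewrite mem_cat nK'.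
- exists n => //; apply: Lnk_step_refuted_dvd b_prems b_concl => //.
  by apply/lt_M; rewrite mem_cat nK' orbT.
Qed.

End Inclusion.

Lemma QIJ_sub_of_dvd I J I' J' :
  all (leq 1) I' -> all (leq 1) J' -> J' != [::] ->
  (forall i, i \in I -> i != 1 -> exists2 i', i' \in I' & i %| i') ->
  (forall j, j \in J -> exists2 j', j' \in J' & j %| j') ->
  forall A : hoopAlg, QIJ I J A -> QIJ I' J' A.
Proof.
move=> /allP I'_gt0 /allP J'_gt0 J'_n0 dvd_I dvd_J A; apply: ISPPu_embed => -[i|j] /= cK.
- have [->|i_neq1] := eqVneq i 1.
    have headJ' : head 0 J' \in J' by case: J' J'_n0 {J'_gt0 dvd_J} => // ? ? _; apply: mem_head.
    exists (GLL (head 0 J')) => //.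
    by exists (@L1_embed (head 0 J') 1); apply/L1_embedding/J'_gt0.
  have [i' i'I' i_dvd] := dvd_I i cK i_neq1.
  exists (GL i') => //; exists (@Ln_scale i i').
  exact: Ln_scale_embedding (I'_gt0 _ i'I') i_dvd.
- have [j' j'J' j_dvd] := dvd_J j cK.
  exists (GLL j') => //; exists (@Lnk_scale j j' 1).
  exact: Lnk_scale_embedding (J'_gt0 _ j'J') j_dvd.
Qed.

Theorem lemma4p12 (I J I' J' : seq nat) :
  all (leq 1) I -> all (leq 1) J -> all (leq 1) I' -> all (leq 1) J' ->
  J != [::] -> J' != [::] ->
  ((forall A : hoopAlg, QIJ I J A -> QIJ I' J' A) <->
   ((forall i, i \in I -> i != 1 -> exists2 i', i' \in I' & i %| i') /\
    (forall j, j \in J -> exists2 j', j' \in J' & j %| j'))).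
Proof.
move=> /allP I_gt0 /allP J_gt0 I'_gt0 J'_gt0 _ J'_n0; split.
- move=> QIJ_sub; split=> [i iI i_neq1 | j jJ].
  + by apply: (QIJ_sub_dvd_I QIJ_sub iI); rewrite ltn_neqAle eq_sym i_neq1 I_gt0.
  + exact: (QIJ_sub_dvd_J QIJ_sub jJ (J_gt0 _ jJ)).
- by case=> dvd_I dvd_J; apply: QIJ_sub_of_dvd.
Qed.
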